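(* Let $h>0$, let $\Omega\subset\mathbb{R}^2$ be a bounded domain and $\vec c\in\mathbb{R}^2$. With the discrete Heaviside function $H$ and $\operatorname{G}H$ as in the context, \[ \sum_{i,j}(\operatorname{G}H)_{ij}=0\qquad\text{and}\qquad\sum_{i,j}\big((x_i,y_j)-\vec c\big)\times(\operatorname{G}H)_{ij}=0, \] where the sums run over all $(i,j)\in\mathbb{Z}^2$.
   Context: $x_i=ih$, $y_j=jh$, $x_{i\pm1/2}=(i\pm\frac12)h$; edges $E_{i+1/2,j}=\{x_{i+1/2}\}\times[y_{j-1/2},y_{j+1/2}]$, $E_{i,j+1/2}=[x_{i-1/2},x_{i+1/2}]\times\{y_{j+1/2}\}$. Discrete Heaviside: $H_{i+1/2,j}=\mathrm{length}(E_{i+1/2,j}\cap\Omega)/h$, $H_{i,j+1/2}=\mathrm{length}(E_{i,j+1/2}\cap\Omega)/h$. $(\operatorname{G}H)_{ij}=\big((H_{i+1/2,j}-H_{i-1/2,j})/h,\;(H_{i,j+1/2}-H_{i,j-1/2})/h\big)$. The planar cross product is the scalar $(a_1,a_2)\times(b_1,b_2)=a_1b_2-a_2b_1$. *)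

From HB Require Import structures.
From mathcomp Require Import all_boot all_order all_algebra.
From mathcomp Require Import all_classical all_reals all_analysis.
Set Implicit Arguments. Unset Strict Implicit. Unset Printing Implicit Defensive.
Import Order.TTheory GRing.Theory Num.Theory.
Local Open Scope classical_set_scope.
Local Open Scope ring_scope.

Section Defs.
Variable R : realType.

Definition gridpt (h : R) (k : int) : R := k%:~R * h.
Definition halfpt (h : R) (k : int) : R := (k%:~R + 2^-1) * h.

(* length of the vertical edge E_{i+1/2,j} ∩ Ω  and horizontal edge E_{i,j+1/2} ∩ Ω,
   as Lebesgue measure of the 1D section *)
Definition len_vert (h : R) (Om : set (R * R)) (i j : int) : R :=
  fine (lebesgue_measure
    [set y : R | halfpt h (j - 1) <= y <= halfpt h j /\ Om (halfpt h i, y)]).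
Definition len_horiz (h : R) (Om : set (R * R)) (i j : int) : R :=
  fine (lebesgue_measure
    [set x : R | halfpt h (i - 1) <= x <= halfpt h i /\ Om (x, halfpt h j)]).

Definition Hv (h : R) Om (i j : int) : R := len_vert h Om i j / h.
Definition Hh (h : R) Om (i j : int) : R := len_horiz h Om i j / h.

Definition GH (h : R) Om (k : int * int) : R * R :=
  let: (i, j) := k in
  ((Hv h Om i j - Hv h Om (i - 1) j) / h, (Hh h Om i j - Hh h Om i (j - 1)) / h).

Definition cross2 (a b : R * R) : R := a.1 * b.2 - a.2 * b.1.

Definition bounded2 (Om : set (R * R)) : Prop :=
  exists M : R, forall p, Om p -> `|p.1| <= M /\ `|p.2| <= M.

Definition domain2 (Om : set (R * R)) : Prop :=
  open (Om : set (R^o * R^o)) /\ connected (Om : set (R^o * R^o)) /\ Om !=set0.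
End Defs.

From HB Require Import structures.
From mathcomp Require Import all_boot all_order all_algebra.
From mathcomp Require Import all_classical all_reals all_analysis.
From mathcomp Require Import ring lra zify.
Import Order.TTheory GRing.Theory Num.Theory.
Local Open Scope classical_set_scope.
Local Open Scope ring_scope.

(* Since Omega is bounded, the discrete Heaviside values H vanish outside a
   finite box of indices, so every sum is a finite sum.  Both components of
   G H are backward differences of such finitely supported functions along a
   coordinate axis, and a sum of differences a k - a (s k) with s a bijection
   (here a unit shift of Z^2) is zero.  For the moment, x_i does not depend on
   j and y_j does not depend on i, so (x_i - c_1) (H_{i,j+1/2} - H_{i,j-1/2})
   and (y_j - c_2) (H_{i+1/2,j} - H_{i-1/2,j}) are again such differences. *)

Definition finitely_supported {T : choiceType} {V : nmodType} (a : T -> V) :=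
  finite_set (a @^-1` [set~ 0]).

Section FinitelySupported.
Context {T : choiceType} {V : zmodType}.
Implicit Types a b : T -> V.

Lemma preimage_setC0B a b :
  (fun k => a k - b k) @^-1` [set~ 0] `<=` a @^-1` [set~ 0] `|` b @^-1` [set~ 0].
Proof.
move=> k /=; apply: contra_notP => /not_orP[/contrapT-> /contrapT->].
by rewrite subrr.
Qed.

Lemma finitely_supportedB a b : finitely_supported a -> finitely_supported b ->
  finitely_supported (fun k => a k - b k).
Proof.
move=> fa fb; apply: sub_finite_set (preimage_setC0B a b) _.
by rewrite finite_setU.
Qed.

Lemma finitely_supported_comp {a} {s : T -> T} : injective s ->
  finitely_supported a -> finitely_supported (a \o s).
Proof. by move=> s_inj; apply: finite_preimage => x y _ _ /s_inj. Qed.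

Lemma finitely_supportedB_comp {a} {s : T -> T} : injective s ->
  finitely_supported a -> finitely_supported (fun k => a k - a (s k)).
Proof.
by move=> s_inj fa; apply: finitely_supportedB (finitely_supported_comp s_inj fa).
Qed.

Lemma fsumrB a b : finitely_supported a -> finitely_supported b ->
  \sum_(k \in [set: T]) (a k - b k) =
  \sum_(k \in [set: T]) a k - \sum_(k \in [set: T]) b k.
Proof.
move=> fa fb; set S := a @^-1` [set~ 0] `|` b @^-1` [set~ 0].
have fS : finite_set S by rewrite finite_setU.
have widen (c : T -> V) : c @^-1` [set~ 0] `<=` S ->
    \sum_(k \in [set: T]) c k = \sum_(k \in S) c k.
  move=> cS; rewrite (fsbig_widen S [set: T] c) // => k [_ nSk].
  by apply: contrapT => /cS.
rewrite !widen //; first by rewrite !fsbig_finite //= big_split sumrN.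
- by move=> k; right.
- by move=> k; left.
- exact: preimage_setC0B.
Qed.

Lemma fsumr_telescope {a} {s : T -> T} : bijective s -> finitely_supported a ->
  \sum_(k \in [set: T]) (a k - a (s k)) = 0.
Proof.
move=> s_bij fa; have fas := finitely_supported_comp (bij_inj s_bij) fa.
by rewrite fsumrB // (reindex_fsbigT s a s_bij) subrr.
Qed.

End FinitelySupported.

Lemma finite_set_pair_neq0 {T : choiceType} {U V : nmodType} {F : T -> U * V}
    {f : T -> U} {g : T -> V} : (forall k, F k = (f k, g k)) ->
  finitely_supported f -> finitely_supported g -> finite_set [set k | F k != (0, 0)].
Proof.
move=> Ffg ff fg.
apply: (@sub_finite_set _ _ (f @^-1` [set~ 0] `|` g @^-1` [set~ 0])); last first.
  by rewrite finite_setU.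
by move=> k /=; rewrite Ffg xpair_eqE negb_and => /orP[] /eqP; [left|right].
Qed.

Lemma finitely_supportedMl (T : choiceType) (R : pzRingType) (a b : T -> R) :
  finitely_supported b -> finitely_supported (fun k => a k * b k).
Proof.
by apply: sub_finite_set => k /=; apply: contra_not => /= ->; rewrite mulr0.
Qed.

Lemma finitely_supportedMr (T : choiceType) (R : pzRingType) (a b : T -> R) :
  finitely_supported a -> finitely_supported (fun k => a k * b k).
Proof.
by apply: sub_finite_set => k /=; apply: contra_not => /= ->; rewrite mul0r.
Qed.

Lemma fine_content_neq0 d (T : semiRingOfSetsType d) (R : realFieldType)
    (mu : {content set T -> \bar R}) (A : set T) :
  fine (mu A) != 0 -> A !=set0.
Proof.
by move=> muA; apply/set0P; apply: contra muA => /eqP ->; rewrite measure0.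
Qed.

Definition int_box (N : int) : set (int * int) :=
  [set k | `|k.1| <= N /\ `|k.2| <= N].

Lemma finite_int_box N : finite_set (int_box N).
Proof.
have finI : finite_set [set z : int | `|z| <= N].
  apply: sub_finite_set
    (finite_image (fun m : nat => m%:Z - N) (finite_II (absz (2 * N + 1)))).
  by move=> z /= zN; exists (absz (z + N)); rewrite /= /mkset; lia.
exact: (finite_setX finI finI).
Qed.

Section HalfGrid.
Context {R : realType} {h : R}.
Hypothesis h_gt0 : 0 < h.

Lemma halfpt_le_ceil {M : R} {i : int} :
  halfpt h i <= M -> i <= Num.ceil (M / h).
Proof.
move=> iM; have : M / h <= (Num.ceil (M / h))%:~R by exact: Num.Theory.ceil_ge.
move: (Num.ceil (M / h)) => n; rewrite ler_pdivrMr // => nM.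
have iSn : i%:~R + 2^-1 <= n%:~R :> R by rewrite -(ler_pM2r h_gt0) (le_trans iM nM).
suff : i%:~R < (n + 1)%:~R :> R by rewrite ltr_int; lia.
by rewrite intrD; lra.
Qed.

Lemma halfpt_ge_Nceil {M : R} {i : int} :
  - M <= halfpt h i -> - Num.ceil (M / h) <= i.
Proof.
move=> Mi; have : M / h <= (Num.ceil (M / h))%:~R by exact: Num.Theory.ceil_ge.
move: (Num.ceil (M / h)) => n; rewrite ler_pdivrMr // => nM.
have nSi : - n%:~R <= i%:~R + 2^-1 :> R.
  by rewrite -(ler_pM2r h_gt0) mulNr (le_trans _ Mi) // lerN2.
suff : (- n - 1)%:~R < i%:~R :> R by rewrite ltr_int; lia.
by rewrite intrB intrN; lra.
Qed.

Lemma len_vert_neq0 (Om : set (R * R)) (M : R) (i j : int) :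
    (forall p, Om p -> `|p.1| <= M /\ `|p.2| <= M) ->
  len_vert h Om i j != 0 -> int_box (Num.ceil (M / h) + 1) (i, j).
Proof.
move=> OmM /fine_content_neq0[y [/andP[jy yj] /OmM[]]].
move=> /ler_normlP[/= x1 x2] /ler_normlP[/= y1 y2].
have := halfpt_le_ceil x2; have := halfpt_ge_Nceil (eqbRL (lerNl _ _) x1).
have := halfpt_le_ceil (le_trans jy y2).
have := halfpt_ge_Nceil (le_trans (eqbRL (lerNl _ _) y1) yj).
rewrite /int_box /=; lia.
Qed.

Lemma finitely_supported_Hv {Om : set (R * R)} :
  bounded2 Om -> finitely_supported (fun k : int * int => Hv h Om k.1 k.2).
Proof.
case=> M OmM; apply: sub_finite_set (finite_int_box (Num.ceil (M / h) + 1)).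
move=> [i j] /= Hv_neq0; apply: len_vert_neq0 OmM _.
by apply/eqP => len0; apply: Hv_neq0; rewrite /Hv len0 mul0r.
Qed.

Lemma finitely_supported_Hh {Om : set (R * R)} :
  bounded2 Om -> finitely_supported (fun k : int * int => Hh h Om k.1 k.2).
Proof.
(* The horizontal edges of Om are the vertical edges of its mirror image. *)
case=> M OmM.
have bOm' : bounded2 (swap_pair @^-1` Om).
  by exists M => -[x y] /OmM[]; split.
exact: (finitely_supported_comp (can_inj swap_pairK) (finitely_supported_Hv bOm')).
Qed.

End HalfGrid.

Definition shift1 (k : int * int) : int * int := (k.1 - 1, k.2).
Definition shift2 (k : int * int) : int * int := (k.1, k.2 - 1).

Lemma bij_shift1 : bijective shift1.
Proof.
by exists (fun k => (k.1 + 1, k.2)) => -[i j]; rewrite /shift1 /= ?subrK ?addrK.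
Qed.

Lemma bij_shift2 : bijective shift2.
Proof.
by exists (fun k => (k.1, k.2 + 1)) => -[i j]; rewrite /shift2 /= ?subrK ?addrK.
Qed.

Theorem lemma4p5 (R : realType) (h : R) (Om : set (R * R)) (c : R * R) :
  0 < h -> domain2 Om -> bounded2 Om ->
  finite_set [set k : int * int | GH h Om k != (0, 0)] /\
  \sum_(k \in [set: int * int]) (GH h Om k).1 = 0 /\
  \sum_(k \in [set: int * int]) (GH h Om k).2 = 0 /\
  \sum_(k \in [set: int * int])
     cross2 (gridpt h k.1 - c.1, gridpt h k.2 - c.2) (GH h Om k) = 0.
Proof.
move=> h_gt0 _ bOm.
pose v k := Hv h Om k.1 k.2 / h; pose w k := Hh h Om k.1 k.2 / h.
have fv : finitely_supported v.
  by apply: finitely_supportedMr; exact: finitely_supported_Hv.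
have fw : finitely_supported w.
  by apply: finitely_supportedMr; exact: finitely_supported_Hh.
have GHE k : GH h Om k = (v k - v (shift1 k), w k - w (shift2 k)).
  by case: k => i j; rewrite /= !mulrBl.
pose x k := (gridpt h k.1 - c.1) * w k; pose y k := (gridpt h k.2 - c.2) * v k.
have crossE k : cross2 (gridpt h k.1 - c.1, gridpt h k.2 - c.2) (GH h Om k) =
    (x k - x (shift2 k)) - (y k - y (shift1 k)).
  by rewrite GHE /cross2 /x /y /=; ring.
have [inj1 inj2] := (bij_inj bij_shift1, bij_inj bij_shift2).
split; first exact: finite_set_pair_neq0 GHE
  (finitely_supportedB_comp inj1 fv) (finitely_supportedB_comp inj2 fw).
split.
  by under eq_fsbigr do rewrite GHE /=; exact: fsumr_telescope bij_shift1 fv.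
split.
  by under eq_fsbigr do rewrite GHE /=; exact: fsumr_telescope bij_shift2 fw.
have fx : finitely_supported x by exact: finitely_supportedMl.
have fy : finitely_supported y by exact: finitely_supportedMl.
under eq_fsbigr do rewrite crossE.
rewrite fsumrB; last 2 first.
- exact: finitely_supportedB_comp inj2 fx.
- exact: finitely_supportedB_comp inj1 fy.
by rewrite (fsumr_telescope bij_shift2 fx) (fsumr_telescope bij_shift1 fy) subrr.
Qed.
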